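(* Let $f_1,\dots,f_M:\mathbb{R}\to(0,1)$ be continuous, strictly increasing cumulative distribution functions and let $w_1\ge\dots\ge w_M> 0$ with $\sum_{i=1}^M w_i=1$; set $F(x)=\sum_{i=1}^M w_i f_i(x)$. For $\epsilon\in(0,1)$ let $k$ be the smallest integer with $\sum_{i=1}^k w_i\ge 1-\epsilon$, let $c:=\sum_{i=1}^k w_i$ and $F_k(x):=\frac{1}{c}\sum_{i=1}^k w_i f_i(x)$. Let $p\in(0,1)$ with $p-2\epsilon\in(0,1)$ and $p+2\epsilon\in(0,1)$. Then \[F^{-1}(p-2\epsilon)\le F_k^{-1}(p)\le F^{-1}(p+2\epsilon).\]
   Context: For a continuous strictly increasing cdf $G$ and $q\in(0,1)$, $G^{-1}(q)$ denotes the unique $x$ with $G(x)=q$ (the $q$-quantile). *)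

From Stdlib Require Import Reals Lra ClassicalEpsilon.
From Coquelicot Require Import Coquelicot.
Open Scope R_scope.

Fixpoint psum (g : nat -> R) (n : nat) : R :=
  match n with
  | O => 0
  | S m => psum g m + g m
  end.

Definition cont_strict_cdf (f : R -> R) : Prop :=
  (forall x, 0 < f x < 1) /\
  (forall x, continuity_pt f x) /\
  (forall x y, x < y -> f x < f y) /\
  is_lim f m_infty 0 /\ is_lim f p_infty 1.

(* G^{-1}(q): the (unique, when it exists) x with G x = q. *)
Definition quantile (G : R -> R) (q : R) : R :=
  epsilon (inhabits 0) (fun x => G x = q).

(* Let x := F_k^{-1}(p), so that sum_{i<k} w_i f_i(x) = c p. The remaining components
   contribute between 0 and 1 - c <= eps to F(x), hence |F(x) - p| <= (1 - c) max(p, 1 - p)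
   <= eps. Since F is nondecreasing and F(F^{-1}(q)) = q, the quantiles at p -+ 2 eps
   (indeed already at p -+ eps) enclose x. *)
From Stdlib Require Import Reals Lra Lia ClassicalEpsilon.
From Coquelicot Require Import Coquelicot.
Open Scope R_scope.

Lemma psum_zero (n : nat) : psum (fun _ => 0) n = 0.
Proof. induction n as [|n IH]; simpl; lra. Qed.

Lemma psum_mult_r (g : nat -> R) (a : R) (n : nat) :
  psum (fun i => g i * a) n = psum g n * a.
Proof. induction n as [|n IH]; simpl; [ring | rewrite IH; ring]. Qed.

Lemma psum_tail_le (g h : nat -> R) (k n : nat) :
  (k <= n)%nat -> (forall i, (k <= i < n)%nat -> g i <= h i) ->
  psum g n - psum g k <= psum h n - psum h k.
Proof.
  intros Hkn; induction Hkn as [|n Hkn IH]; intros Hgh; simpl.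
  - lra.
  - assert (g n <= h n) by (apply Hgh; lia).
    assert (psum g n - psum g k <= psum h n - psum h k) by (apply IH; intros; apply Hgh; lia).
    lra.
Qed.

Lemma psum_tail_nonneg (g : nat -> R) (k n : nat) :
  (k <= n)%nat -> (forall i, (k <= i < n)%nat -> 0 <= g i) ->
  0 <= psum g n - psum g k.
Proof.
  intros Hkn Hg.
  pose proof (psum_tail_le (fun _ => 0) g k n Hkn Hg) as H.
  rewrite !psum_zero in H; lra.
Qed.

Lemma psum_le (g h : nat -> R) (n : nat) :
  (forall i, (i < n)%nat -> g i <= h i) -> psum g n <= psum h n.
Proof.
  intros Hgh.
  assert (H : psum g n - psum g 0 <= psum h n - psum h 0).
  { apply psum_tail_le; [lia | intros i Hi; apply Hgh; lia]. }
  simpl in H; lra.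
Qed.

Lemma continuity_pt_psum (g : nat -> R -> R) (n : nat) (y : R) :
  (forall i, (i < n)%nat -> continuity_pt (g i) y) ->
  continuity_pt (fun x => psum (fun i => g i x) n) y.
Proof.
  induction n as [|n IH]; intros Hg; simpl.
  - apply continuity_pt_const; intros u v; reflexivity.
  - apply continuity_pt_plus; [apply IH; intros i Hi |]; apply Hg; lia.
Qed.

Lemma is_lim_psum (g : nat -> R -> R) (l : nat -> R) (x : Rbar) (n : nat) :
  (forall i, (i < n)%nat -> is_lim (g i) x (l i)) ->
  is_lim (fun y => psum (fun i => g i y) n) x (psum l n).
Proof.
  induction n as [|n IH]; intros Hg; simpl.
  - apply is_lim_const.
  - apply is_lim_plus'; [apply IH; intros i Hi |]; apply Hg; lia.
Qed.

Lemma quantile_spec (G : R -> R) (l0 l1 q : R) :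
  continuity G -> is_lim G m_infty l0 -> is_lim G p_infty l1 -> l0 < q < l1 ->
  G (quantile G q) = q.
Proof.
  intros Hc H0 H1 Hq.
  destruct (IVT_Rbar_incr G m_infty p_infty l0 l1 q H0 H1 (fun x _ _ => Hc x) I Hq)
    as [x [_ [_ Hx]]].
  unfold quantile; apply epsilon_spec; exists x; exact Hx.
Qed.

Lemma quantile_le_of_lt (G : R -> R) (q x : R) :
  (forall x y, x <= y -> G x <= G y) -> G (quantile G q) = q -> q < G x ->
  quantile G q <= x.
Proof.
  intros Hmono Hq Hx.
  destruct (Rle_or_lt (quantile G q) x) as [H|H]; [exact H|].
  pose proof (Hmono x _ (Rlt_le _ _ H)); lra.
Qed.

Lemma le_quantile_of_lt (G : R -> R) (q x : R) :
  (forall x y, x <= y -> G x <= G y) -> G (quantile G q) = q -> G x < q ->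
  x <= quantile G q.
Proof.
  intros Hmono Hq Hx.
  destruct (Rle_or_lt x (quantile G q)) as [H|H]; [exact H|].
  pose proof (Hmono _ x (Rlt_le _ _ H)); lra.
Qed.

Section Mixture.

Variables (M : nat) (f : nat -> R -> R) (w : nat -> R).
Hypothesis Hf : forall i, (i < M)%nat -> cont_strict_cdf (f i).
Hypothesis Hwpos : forall i, (i < M)%nat -> 0 < w i.

Definition mixture (n : nat) (x : R) : R := psum (fun i => w i * f i x) n.

Lemma mixture_continuous (n : nat) : (n <= M)%nat -> continuity (mixture n).
Proof.
  intros Hn y; apply continuity_pt_psum; intros i Hi.
  apply continuity_pt_scal, (Hf i ltac:(lia)).
Qed.

Lemma mixture_nondecreasing (n : nat) (x y : R) :
  (n <= M)%nat -> x <= y -> mixture n x <= mixture n y.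
Proof.
  intros Hn Hxy; apply psum_le; intros i Hi.
  destruct (Hf i ltac:(lia)) as [_ [_ [Hincr _]]].
  apply Rmult_le_compat_l; [apply Rlt_le, Hwpos; lia|].
  destruct Hxy as [Hlt|<-]; [apply Rlt_le, Hincr, Hlt | apply Rle_refl].
Qed.

Lemma is_lim_mixture (n : nat) (x : Rbar) (L : R) :
  (forall i, (i < n)%nat -> is_lim (f i) x L) ->
  is_lim (mixture n) x (psum w n * L).
Proof.
  intros HL; rewrite <- psum_mult_r.
  apply is_lim_psum; intros i Hi.
  apply (is_lim_scal_l (f i) (w i) x L), HL, Hi.
Qed.

Lemma mixture_tail_bounds (k n : nat) (x : R) :
  (k <= n <= M)%nat ->
  0 <= mixture n x - mixture k x <= psum w n - psum w k.
Proof.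
  intros Hkn; unfold mixture; split.
  - apply psum_tail_nonneg; [lia|]; intros i Hi.
    destruct (Hf i ltac:(lia)) as [Hrange _].
    pose proof (Hrange x); pose proof (Hwpos i ltac:(lia)); nra.
  - apply psum_tail_le; [lia|]; intros i Hi.
    destruct (Hf i ltac:(lia)) as [Hrange _].
    pose proof (Hrange x); pose proof (Hwpos i ltac:(lia)); nra.
Qed.

Lemma quantile_normalized_mixture (k : nat) (q : R) :
  (k <= M)%nat -> 0 < psum w k -> 0 < q < 1 ->
  let Fk := fun x => / psum w k * mixture k x in
  Fk (quantile Fk q) = q.
Proof.
  intros HkM Hc Hq Fk.
  apply (quantile_spec Fk (/ psum w k * (psum w k * 0)) (/ psum w k * (psum w k * 1))).
  - intro y; apply continuity_pt_scal, mixture_continuous, HkM.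
  - apply (is_lim_scal_l _ _ m_infty (Finite _)), is_lim_mixture.
    intros i Hi; apply (Hf i); lia.
  - apply (is_lim_scal_l _ _ p_infty (Finite _)), is_lim_mixture.
    intros i Hi; apply (Hf i); lia.
  - rewrite !Rmult_0_r, Rmult_1_r, Rinv_l by lra; exact Hq.
Qed.

Lemma quantile_mixture (q : R) :
  psum w M = 1 -> 0 < q < 1 -> mixture M (quantile (mixture M) q) = q.
Proof.
  intros Hw Hq.
  apply (quantile_spec _ (psum w M * 0) (psum w M * 1)).
  - apply mixture_continuous, le_n.
  - apply is_lim_mixture; intros i Hi; apply (Hf i Hi).
  - apply is_lim_mixture; intros i Hi; apply (Hf i Hi).
  - rewrite Hw; lra.
Qed.

Lemma mixture_near_truncation (k : nat) (q x : R) :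
  (k <= M)%nat -> psum w M = 1 -> 0 <= q <= 1 -> mixture k x = psum w k * q ->
  q - (1 - psum w k) <= mixture M x <= q + (1 - psum w k).
Proof.
  intros HkM Hw Hq Hhead.
  pose proof (mixture_tail_bounds k M x ltac:(lia)) as Htail.
  rewrite Hw, Hhead in Htail.
  assert (0 <= (1 - psum w k) * q <= 1 - psum w k) by (split; nra).
  split; nra.
Qed.

End Mixture.

Theorem proposition1
  (M : nat) (f : nat -> R -> R) (w : nat -> R)
  (Hf : forall i, (i < M)%nat -> cont_strict_cdf (f i))
  (Hwpos : forall i, (i < M)%nat -> 0 < w i)
  (Hwdec : forall i j, (i <= j)%nat -> (j < M)%nat -> w j <= w i)
  (Hwsum : psum w M = 1)
  (eps : R) (Heps : 0 < eps < 1)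
  (k : nat) (Hk : psum w k >= 1 - eps)
  (Hkmin : forall j, (j < k)%nat -> psum w j < 1 - eps)
  (p : R) (Hp : 0 < p < 1)
  (Hpm : 0 < p - 2 * eps < 1) (Hpp : 0 < p + 2 * eps < 1) :
  let F := fun x => psum (fun i => w i * f i x) M in
  let c := psum w k in
  let Fk := fun x => / c * psum (fun i => w i * f i x) k in
  quantile F (p - 2 * eps) <= quantile Fk p <= quantile F (p + 2 * eps).
Proof.
  intros F c Fk.
  fold c in Hk.
  assert (HkM : (k <= M)%nat).
  { destruct (Nat.le_gt_cases k M) as [H|H]; [exact H|].
    specialize (Hkmin M H); lra. }
  assert (Hcpos : 0 < c) by lra.
  pose proof (quantile_normalized_mixture M f w Hf k p HkM Hcpos Hp) as HFk.
  change (Fk (quantile Fk p) = p) in HFk.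
  set (x := quantile Fk p) in *.
  assert (Hhead : mixture f w k x = c * p).
  { unfold Fk in HFk; rewrite <- HFk; unfold mixture; field; lra. }
  pose proof (mixture_near_truncation M f w Hf Hwpos k p x HkM Hwsum
                ltac:(lra) Hhead) as HFx.
  change (mixture f w M x) with (F x) in HFx; fold c in HFx.
  pose proof (mixture_nondecreasing M f w Hf Hwpos M) as HFmono.
  split.
  - apply quantile_le_of_lt; [intros; apply HFmono; auto
                             | apply quantile_mixture, Hpm; assumption | lra].
  - apply le_quantile_of_lt; [intros; apply HFmono; auto
                             | apply quantile_mixture, Hpp; assumption | lra].
Qed.
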